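(* Let $L,k,N,a,r,\epsilon,p,l_j,t_j$, the state $|\phi_{final}\rangle$ and the measurement outcome $m_k$ be as in the context. Let $s_0\in\{0,1,\dots,r-1\}$ be such that $2^{l_k+1}\cdot\frac{s_0}{r}$ is an integer, i.e. $\frac{s_0}{r}=0.c_1c_2\cdots c_{l_k+1}$ in binary. Then the probability that $m_k=c_{l_k}c_{l_k+1}0\cdots0$ (a $t_k$-bit string) is at least $\frac{1}{r}$.
   Context: $L\ge1$, $k\ge1$ integers with $k\mid L$; $N$ an $L$-bit integer; $a<N$ positive with $\gcd(a,N)=1$; $r$ the order of $a$ mod $N$; $\epsilon>0$. Bit strings are identified with binary integers (most significant bit first). $|\psi_{t,\omega}\rangle=QFT^{-1}\frac{1}{\sqrt{2^t}}\sum_{j=0}^{2^t-1}e^{2\pi ij\omega}|j\rangle$ with $QFT|j\rangle=\frac{1}{\sqrt{2^t}}\sum_{x=0}^{2^t-1}e^{2\pi ijx/2^t}|x\rangle$. $|u_s\rangle=\frac{1}{\sqrt r}\sum_{q=0}^{r-1}e^{-2\pi isq/r}|a^q\bmod N\rangle$ ($L$ qubits), orthonormal for $s=0,\dots,r-1$. Parameters: $p=\lceil\log_2(2+\frac{k}{2\epsilon})\rceil$; $l_j=(j-1)\frac Lk+1$ for $j=1,\dots,k$, $l_{k+1}=2L$; $t_j=l_{j+1}+2-l_j+p$. Registers $A_j$ ($t_j$ qubits, $j=1,\dots,k$) and $C$ ($L$ qubits) are in the state $|\phi_{final}\rangle=\frac{1}{\sqrt r}\sum_{s=0}^{r-1}\big(\bigotimes_{j=1}^k|\psi_{t_j,2^{l_j-1}s/r}\rangle_{A_j}\big)|u_s\rangle_C$,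 and $m_k$ is the $t_k$-bit outcome of measuring register $A_k$ in the computational basis. *)

From HB Require Import structures.
From mathcomp Require Import all_boot all_order all_algebra.
From mathcomp Require Import complex.
From mathcomp Require Import reals exp trigo.
Unset Printing Implicit Defensive.
Import Order.TTheory GRing.Theory Num.Theory.
Local Open Scope ring_scope.
Local Open Scope complex_scope.

Section Defs.
Variable R : realType.

Definition expi (theta : R) : R[i] := (cos theta) +i* (sin theta).

Definition normsq (z : R[i]) : R := (@complex.Re R z) ^+ 2 + (@complex.Im R z) ^+ 2.

Definition is_order (N a r : nat) : Prop :=
  (0 < r)%N /\ a ^ r = 1 %[mod N] /\
  (forall q, (0 < q < r)%N -> a ^ q <> 1 %[mod N]).

Definition Lbit (L N : nat) : Prop := (2 ^ L.-1 <= N < 2 ^ L)%N.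

Definition p_of (k : nat) (eps : R) : nat :=
  `| Num.ceil (ln (2 + k%:R / (2 * eps)) / ln 2) |%N.

(* l_j for j = 1..k+1 (1-indexed): l_j = (j-1) L/k + 1, l_{k+1} = 2L *)
Definition l_ (L k j : nat) : nat :=
  if j == k.+1 then (2 * L)%N else ((j - 1) * (L %/ k) + 1)%N.

Definition t_ (L k p j : nat) : nat := (l_ L k j.+1 + 2 - l_ L k j + p)%N.

(* component x (0 <= x < 2^t) of |psi_{t,omega}> =
   QFT^{-1} (2^{-t/2} sum_y e^{2 pi i y omega} |y>), where
   QFT^{-1}|y> = 2^{-t/2} sum_x e^{-2 pi i y x / 2^t} |x> *)
Definition psi_amp (t : nat) (omega : R) (x : nat) : R[i] :=
  \sum_(y < 2 ^ t)
     ((Num.sqrt (2 ^+ t))^-1)%:C * expi (2 * pi * y%:R * omega) *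
     (((Num.sqrt (2 ^+ t))^-1)%:C *
       expi (- (2 * pi * y%:R * x%:R / (2 ^+ t)))).

Definition u_amp (N a r s y : nat) : R[i] :=
  ((Num.sqrt r%:R)^-1)%:C *
  \sum_(q < r) (if (a ^ q %% N == y)%N then expi (- (2 * pi * (s * q)%:R / r%:R))
                else 0).

Definition omega (L k r j s : nat) : R := (2 ^ (l_ L k j - 1) * s)%:R / r%:R.

(* basis states of A_1 (x) ... (x) A_k : x : 'I_k -> 'I_B (j-th register is
   x (j-1), 0-indexed), restricted to x j < 2^{t_{j+1}}; B bounds all 2^{t_j}. *)
Definition Bnd (L p : nat) : nat := (2 ^ (2 * L + 2 + p))%N.

Definition valid_basis (L k p : nat) (x : {ffun 'I_k -> 'I_(Bnd L p)}) : bool :=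
  [forall j : 'I_k, (x j < 2 ^ t_ L k p j.+1)%N].

Definition phi_amp (L k N a r p : nat) (x : {ffun 'I_k -> 'I_(Bnd L p)}) (y : nat) : R[i] :=
  ((Num.sqrt r%:R)^-1)%:C *
  \sum_(s < r)
     ((\prod_(j < k) psi_amp (t_ L k p j.+1) (omega L k r j.+1 s) (x j)) *
      u_amp N a r s y).

Definition prob_Ak (L k N a r p m : nat) : R :=
  \sum_(x : {ffun 'I_k -> 'I_(Bnd L p)} |
          valid_basis L k p x && [exists j : 'I_k, (j.+1 == k) && (x j == m :> nat)])
     \sum_(y < 2 ^ L) normsq (phi_amp L k N a r p x y).

(* bit c_i (1-indexed) of s0/r = 0.c_1 c_2 ... c_n  (n = number of bits) *)
Definition bit_c (r s0 n i : nat) : nat := ((s0 * 2 ^ n %/ r) %/ 2 ^ (n - i)) %% 2.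

End Defs.

From HB Require Import structures.
From mathcomp Require Import all_boot all_order all_algebra.
From mathcomp Require Import complex.
From mathcomp Require Import reals exp trigo.
From mathcomp Require Import ring lra zify.
Import Order.TTheory GRing.Theory Num.Theory.

(* Tracing out register C, the |u_s> are orthonormal (q |-> a^q mod N is
   injective on [0, r) because r is the order of a), so the probability of the
   outcome is (1/r) sum_s prod_j P_(j,s), where P_(j,s) is the weight that
   |psi_(t_j, omega_(j,s))> puts on the values allowed for register A_j: all of
   them for j < k, only m for j = k.  For s = s0 the phase
   omega_(k,s0) = 2^(l_k - 1) s0 / r is an integer plus m / 2^(t_k), its
   fractional part being 0.c_(l_k) c_(l_k + 1) in binary; hence
   |psi_(t_k, omega_(k,s0))> is exactly the basis state m, and since the other
   |psi> are normalised (Parseval for the discrete Fourier transform) every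
   factor of the s0 term equals 1. *)

Set Implicit Arguments.
Unset Strict Implicit.

Lemma order_expn_mod_inj N a r : (0 < a)%N -> coprime a N -> is_order N a r ->
  injective (fun q : 'I_r => a ^ q %% N)%N.
Proof.
move=> a_gt0 a_coprime [_ [_ r_min]].
have no_collision (q q' : 'I_r) : (q < q')%N -> (a ^ q %% N <> a ^ q' %% N)%N.
  move=> lt_qq' eq_mod; apply: (r_min (q' - q)%N); first by have := ltn_ord q'; lia.
  have pow_gt0 : (0 < a ^ (q' - q))%N by rewrite expn_gt0 a_gt0.
  apply/eqP; rewrite eqn_mod_dvd //.
  have : (a ^ q * a ^ (q' - q) == a ^ q * 1 %[mod N])%N.
    by rewrite -expnD subnKC 1?ltnW // muln1 eq_mod.
  rewrite eqn_mod_dvd ?leq_mul2l ?pow_gt0 ?orbT // -mulnBr Gauss_dvdr //.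
  by rewrite coprime_sym coprimeXl.
move=> q q' eq_mod; case: (ltngtP q q') => [lt_qq'|lt_q'q|/val_inj //].
  by case: (no_collision _ _ lt_qq').
by case: (no_collision _ _ lt_q'q).
Qed.

Section Registers.
Variables L k : nat.
Hypotheses (L_gt0 : (0 < L)%N) (k_gt0 : (0 < k)%N) (k_dvd_L : (k %| L)%N).

Let L_eq : L = (L %/ k * k)%N. Proof. by rewrite divnK. Qed.

Lemma l_le_double i : (i <= k.+1)%N -> (l_ L k i <= 2 * L)%N.
Proof.
rewrite /l_; case: eqP => // _ le_ik.
have le_i1k : (i - 1 <= k)%N by lia.
have := leq_mul le_i1k (leqnn (L %/ k)); move: L_eq; lia.
Qed.

Lemma l_last_bounds : (0 < l_ L k k <= L)%N.
Proof.
rewrite /l_ (ltn_eqF (ltnSn k)) addn1 ltnS /=.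
have d_gt0 : (0 < L %/ k)%N by rewrite divn_gt0 // dvdn_leq.
have := leq_mul (leq_subr 1 k) (leqnn (L %/ k)); move: L_eq d_gt0; nia.
Qed.

Lemma t_last_ge2 p : (2 <= t_ L k p k)%N.
Proof. rewrite /t_ {1}/l_ eqxx; have := l_last_bounds; lia. Qed.

Lemma exp_t_le_Bnd p (j : 'I_k) : (2 ^ t_ L k p j.+1 <= Bnd L p)%N.
Proof.
rewrite /Bnd leq_exp2l // /t_; have := @l_le_double j.+2 (ltn_ord j); lia.
Qed.

End Registers.

Definition allowed_outcomes L k p m (j : 'I_k) : pred 'I_(Bnd L p) :=
  [pred v : 'I_(Bnd L p) | (v < 2 ^ t_ L k p j.+1)%N && ((j.+1 == k) ==> (v == m :> nat))].
Arguments allowed_outcomes : clear implicits.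

Lemma valid_outcome_family L k p m (x : {ffun 'I_k -> 'I_(Bnd L p)}) : (0 < k)%N ->
  valid_basis L k p x && [exists j : 'I_k, (j.+1 == k) && (x j == m :> nat)] =
  (x \in family (allowed_outcomes L k p m)).
Proof.
move=> k_gt0; have last_lt : (k.-1 < k)%N by rewrite prednK.
apply/idP/familyP => [|x_allowed].
  move=> /andP[/forallP x_valid /existsP[j0 /andP[/eqP j0_last /eqP x_j0]]] j.
  rewrite inE x_valid /=; apply/implyP => /eqP j_last.
  by rewrite (_ : j = j0) ?x_j0 //; apply: val_inj => /=; lia.
apply/andP; split; first by apply/forallP => j; have /andP[] := x_allowed j.
apply/existsP; exists (Ordinal last_lt); rewrite /= prednK // eqxx /=.
by have /andP[_ /implyP] := x_allowed (Ordinal last_lt); apply; rewrite /= prednK.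
Qed.

Lemma bit_c_lt2 r s0 n i : (bit_c r s0 n i < 2)%N.
Proof. exact: ltn_mod. Qed.

Lemma two_bits_lt c1 c2 t : (2 <= t)%N -> (c1 < 2)%N -> (c2 < 2)%N ->
  (c1 * 2 ^ (t - 1) + c2 * 2 ^ (t - 2) < 2 ^ t)%N.
Proof.
case: t => [|[|T]] // _ c1_lt2 c2_lt2; rewrite !subSS !subn0 !expnS.
have := expn_gt0 2 T; nia.
Qed.

Local Open Scope ring_scope.
Local Open Scope complex_scope.

Lemma natr_div_decomp (F : numFieldType) (x K m q r : nat) :
  (x * q = (K * q + m) * r)%N -> (0 < r)%N -> (0 < q)%N ->
  (x%:R / r%:R : F) = K%:R + m%:R / q%:R.
Proof.
move=> eq_nat r_gt0 q_gt0.
have r_neq0 : (r%:R : F) != 0 by rewrite pnatr_eq0 -lt0n.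
have q_neq0 : (q%:R : F) != 0 by rewrite pnatr_eq0 -lt0n.
have eq_F : (x%:R * q%:R : F) = (K%:R * q%:R + m%:R) * r%:R.
  by rewrite -!natrM -natrD -natrM eq_nat.
by rewrite -[x%:R](mulfK q_neq0) eq_F; field; apply/andP.
Qed.

Lemma phase_binary_expansion (F : numFieldType) lk t r s0 :
  (0 < lk)%N -> (2 <= t)%N -> (0 < r)%N -> (r %| s0 * 2 ^ (lk + 1))%N ->
  let c := bit_c r s0 (lk + 1) in
  ((2 ^ (lk - 1) * s0)%:R / r%:R : F) =
  ((s0 * 2 ^ (lk + 1) %/ r) %/ 4)%:R + (c lk * 2 ^ (t - 1) + c (lk + 1) * 2 ^ (t - 2))%:R / 2 ^+ t.
Proof.
move=> lk_gt0 t_ge2 r_gt0 r_dvd c.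
set S := (s0 * 2 ^ (lk + 1) %/ r)%N.
have S_r : (S * r = s0 * 2 ^ (lk + 1))%N := divnK r_dvd.
have c_lk : c lk = ((S %/ 2) %% 2)%N.
  by rewrite /c /bit_c (_ : lk + 1 - lk = 1)%N ?expn1 //; lia.
have c_lk1 : c (lk + 1) = (S %% 2)%N by rewrite /c /bit_c subnn expn0 divn1.
rewrite -natrX c_lk c_lk1; apply: natr_div_decomp => //; last by rewrite expn_gt0.
case: t t_ge2 => [|[|T]] // _; rewrite !subSS !subn0.
have pow_lk : (2 ^ (lk + 1) = 2 ^ (lk - 1) * 4)%N.
  by rewrite -[4%N]/(2 ^ 2)%N -expnD; congr (2 ^ _)%N; lia.
have S_digits : (S = S %/ 4 * 4 + (S %/ 2) %% 2 * 2 + S %% 2)%N by lia.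
transitivity (S * r * 2 ^ T)%N; first by rewrite S_r pow_lk !expnS; ring.
by rewrite {1}S_digits !expnS; ring.
Qed.

Lemma sum_exprs_root1_eq0 (F : fieldType) (z : F) n :
  z != 1 -> z ^+ n = 1 -> \sum_(i < n) z ^+ i = 0.
Proof.
move=> z_neq1 zn1; have := subrX1 z n.
by rewrite zn1 subrr => /esym/eqP; rewrite mulf_eq0 subr_eq0 (negbTE z_neq1) => /eqP.
Qed.

Section Amplitudes.
Variable R : realType.
Local Notation C := R[i].
Local Notation expi := (expi R).

(* Versions of [normCK], [rmorphM] and [rmorph_sum] stated with [conjc]: the
   generic ones produce [Num.conj] or coerced-morphism terms that do not
   rewrite against [conjc]. *)
Lemma sqr_normc (z : C) : `|z| ^+ 2 = z * z^*%C.
Proof. exact: normCK. Qed.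

Lemma conjcM (x y : C) : (x * y)^*%C = x^*%C * y^*%C.
Proof. exact: rmorphM. Qed.

Lemma conjc_sum (I : finType) (P : pred I) (F : I -> C) :
  (\sum_(i | P i) F i)^*%C = \sum_(i | P i) (F i)^*%C.
Proof. exact: rmorph_sum. Qed.

Lemma expiD (x y : R) : expi (x + y) = expi x * expi y.
Proof.
by apply/eqP; rewrite eq_complex /= sinD cosD; apply/andP; split; apply/eqP; ring.
Qed.

Lemma expiN (x : R) : expi (- x) = (expi x)^*%C.
Proof. by rewrite /expi /= cosN sinN. Qed.

Lemma expi0 : expi 0 = 1.
Proof. by rewrite /expi cos0 sin0. Qed.

Lemma expiMn (x : R) n : expi x ^+ n = expi (x *+ n).
Proof. by elim: n => [|n IH]; rewrite ?expi0 // exprS IH mulrS expiD. Qed.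

Lemma expi_2pi_nat n : expi (2 * pi * n%:R) = 1.
Proof.
rewrite mulr_natr mulrC mulr_natr -expiMn.
by rewrite /expi cos2pi sin2pi expr1n.
Qed.

Lemma normr_expi (x : R) : `|expi x| = 1.
Proof.
by apply/eqP; rewrite -sqrp_eq1 // sqr_normc -expiN -expiD subrr expi0.
Qed.

Lemma expi_neq1 (x : R) : 0 < x < pi *+ 2 -> expi x != 1.
Proof.
move=> /andP[x_gt0 x_lt2pi]; apply/negP => /eqP [cos_x1 _].
have half_range : 0 < x / 2 < pi by rewrite divr_gt0 // ltr_pdivrMr // mulr_natr.
have sin_half_gt0 := sin_gt0_pi half_range.
have x_double : x = (x / 2) *+ 2 by rewrite mulr2n -splitr.
rewrite x_double cos_mulr2n mulr2n in cos_x1.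
have := cos2Dsin2 (x / 2); nra.
Qed.

Lemma sum_delta_mulr (I : finType) (i : I) (F : I -> C) :
  \sum_i' (i == i')%:R * F i' = F i.
Proof.
under eq_bigr => i' _ do rewrite mulr_natl mulrb eq_sym.
by rewrite -big_mkcond big_pred1_eq.
Qed.

Lemma sum_sqr_normc_orthogonal (I J : finType) (e : I -> J -> C) (c : I -> C) (kappa : C) :
  (forall i i', \sum_j e i j * (e i' j)^*%C = (i == i')%:R * kappa) ->
  \sum_j `|\sum_i c i * e i j| ^+ 2 = (\sum_i `|c i| ^+ 2) * kappa.
Proof.
move=> e_orth.
under eq_bigr => j _ do rewrite sqr_normc conjc_sum big_distrlr.
rewrite exchange_big mulr_suml; apply: eq_bigr => i _.
transitivity (\sum_i' c i * (c i')^*%C * ((i == i')%:R * kappa)).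
  rewrite exchange_big; apply: eq_bigr => i' _.
  rewrite -e_orth mulr_sumr; apply: eq_bigr => j _.
  by rewrite conjcM mulrACA.
under eq_bigr => i' _ do rewrite mulrCA.
by rewrite sum_delta_mulr sqr_normc.
Qed.

Definition dft_kernel (n y x : nat) : C := expi (- (2 * pi * (y * x)%:R / n%:R)).

Lemma dft_kernel_orthogonal n (y y' : 'I_n) :
  \sum_(x < n) dft_kernel n y x * (dft_kernel n y' x)^*%C = (y == y')%:R * n%:R.
Proof.
have n_gt0 : (0 < n)%N by case: y => /= ? ?; lia.
have n_neq0 : (n%:R : R) != 0 by rewrite pnatr_eq0 -lt0n.
have kernel_prod (u v : 'I_n) (x : 'I_n) : (u <= v)%N ->
    dft_kernel n u x * (dft_kernel n v x)^*%C =
    expi (2 * pi * (v - u)%:R / n%:R) ^+ x.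
  move=> le_uv; rewrite -expiN opprK -expiD expiMn; congr expi.
  by rewrite natrB // !natrM -mulr_natr; field.
have off_diag (u v : 'I_n) : (u < v)%N ->
    \sum_(x < n) dft_kernel n u x * (dft_kernel n v x)^*%C = 0.
  move=> lt_uv; under eq_bigr => x _ do rewrite (kernel_prod _ _ _ (ltnW lt_uv)).
  apply: sum_exprs_root1_eq0.
    apply: expi_neq1; apply/andP; split.
      by rewrite !mulr_gt0 ?pi_gt0 ?invr_gt0 ?ltr0n ?subn_gt0.
    have frac_lt1 : (v - u)%:R / n%:R < 1 :> R.
      by rewrite ltr_pdivrMr ?ltr0n // mul1r ltr_nat; have := ltn_ord v; lia.
    have := pi_gt0 R; rewrite -mulrA -mulr_natr; nra.
  by rewrite expiMn -[_ *+ n]mulr_natr divfK // expi_2pi_nat.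
case: (eqVneq y y') => [<-|ne_yy']; rewrite ?eqxx ?mul1r ?mul0r.
  under eq_bigr => x _ do rewrite kernel_prod // subnn mulr0n mulr0 mul0r expi0 expr1n.
  by rewrite sumr_const card_ord.
case: (ltngtP y y') => [lt_yy'|lt_y'y|eq_yy']; first exact: off_diag.
  rewrite -[RHS](conjc0 R) -[in RHS](off_diag _ _ lt_y'y) conjc_sum.
  by apply: eq_bigr => x _; rewrite conjcM conjcK mulrC.
by move: ne_yy'; rewrite (val_inj eq_yy') eqxx.
Qed.

Lemma sqr_normc_real (x : R) : `|x%:C| ^+ 2 = (x ^+ 2)%:C.
Proof. by rewrite sqr_normc conjc_real rmorphXn expr2. Qed.

Lemma psi_amp_dft t (om : R) x : psi_amp R t om x =
  \sum_(y < 2 ^ t) (((2 ^+ t)^-1 : R)%:C * expi (2 * pi * y%:R * om)) * dft_kernel (2 ^ t) y x.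
Proof.
apply: eq_bigr => y _; rewrite mulrACA -rmorphM -invfM -expr2 sqr_sqrtr ?exprn_ge0 //.
by rewrite /dft_kernel natrM natrX !mulrA.
Qed.

Lemma sum_sqr_norm_psi_amp t (om : R) : \sum_(x < 2 ^ t) `|psi_amp R t om x| ^+ 2 = 1.
Proof.
under eq_bigr => x _ do rewrite psi_amp_dft.
rewrite (sum_sqr_normc_orthogonal
  (fun y : 'I_(2 ^ t) => ((2 ^+ t)^-1 : R)%:C * expi (2 * pi * y%:R * om))
  (@dft_kernel_orthogonal (2 ^ t))).
under eq_bigr => y _ do rewrite normrM exprMn normr_expi expr1n mulr1 sqr_normc_real.
rewrite sumr_const card_ord -rmorphMn -(rmorph_nat (real_complex R)) -rmorphM /=.
have two_t_neq0 : (2 ^+ t : R) != 0 by rewrite expf_neq0 // pnatr_eq0.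
rewrite -mulr_natr natrX.
have -> : 2 ^- t ^+ 2 * 2 ^+ t * 2 ^+ t = 1 :> R by field.
exact: rmorph1.
Qed.

Lemma psi_amp_peak t (om : R) (K m : nat) :
  om = K%:R + m%:R / 2 ^+ t -> psi_amp R t om m = 1.
Proof.
move=> om_eq; have two_t_neq0 : (2 ^+ t : R) != 0 by rewrite expf_neq0 // pnatr_eq0.
rewrite psi_amp_dft; under eq_bigr => y _.
  rewrite -mulrA -expiD.
  have -> : 2 * pi * y%:R * om + - (2 * pi * (y * m)%:R / (2 ^ t)%:R) = 2 * pi * (y * K)%:R.
    by rewrite om_eq !natrM natrX; field.
  rewrite expi_2pi_nat mulr1.
  over.
by rewrite sumr_const card_ord -rmorphMn /= -mulr_natr natrX mulVf.
Qed.

Lemma u_amp_dft N a r s (y : nat) : u_amp R N a r s y =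
  ((Num.sqrt (r%:R : R))^-1)%:C * \sum_(q < r | (a ^ q %% N == y)%N) dft_kernel r s q.
Proof. by rewrite /u_amp [in RHS]big_mkcond. Qed.

Lemma sum_fiber_mul n M (g : 'I_n -> nat) (f h : 'I_n -> C) :
  injective g -> (forall q, g q < M)%N ->
  \sum_(y < M) (\sum_(q | g q == y) f q) * (\sum_(q | g q == y) h q) = \sum_q f q * h q.
Proof.
move=> g_inj g_lt.
have fiber (y : 'I_M) : (\sum_(q | g q == y) f q) * (\sum_(q | g q == y) h q) =
    \sum_(q | g q == y) f q * h q.
  rewrite mulr_suml; apply: eq_bigr => q /eqP gq.
  rewrite mulr_sumr (bigD1 q) ?gq //= big1 ?addr0 // => q' /andP[/eqP gq' ne_q'q].
  by case/eqP: ne_q'q; apply: g_inj; rewrite gq gq'.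
under eq_bigr do rewrite fiber.
by rewrite [RHS](partition_big (fun q => Ordinal (g_lt q)) predT).
Qed.

Lemma u_amp_orthonormal N a r M (s s' : 'I_r) :
  injective (fun q : 'I_r => a ^ q %% N)%N -> (forall q : 'I_r, a ^ q %% N < M)%N ->
  \sum_(y < M) u_amp R N a r s y * (u_amp R N a r s' y)^*%C = (s == s')%:R.
Proof.
move=> g_inj g_lt; have r_gt0 : (0 < r)%N by case: s => /= ? ?; lia.
under eq_bigr do rewrite !u_amp_dft conjcM conjc_real conjc_sum mulrACA.
rewrite -mulr_sumr (sum_fiber_mul _ _ g_inj g_lt) dft_kernel_orthogonal.
rewrite -rmorphM -invfM -expr2 sqr_sqrtr ?ler0n // mulrCA -(rmorph_nat (real_complex R) r).
by rewrite -rmorphM mulVf ?pnatr_eq0 -?lt0n // rmorph1 mulr1.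
Qed.

Lemma sum_sqr_norm_phi_amp L k N a r p x :
  injective (fun q : 'I_r => a ^ q %% N)%N -> (forall q : 'I_r, a ^ q %% N < 2 ^ L)%N ->
  \sum_(y < 2 ^ L) `|phi_amp R L k N a r p x y| ^+ 2 =
  ((r%:R : R)^-1)%:C * \sum_(s < r)
    `|\prod_(j < k) psi_amp R (t_ L k p j.+1) (omega R L k r j.+1 s) (x j)| ^+ 2.
Proof.
move=> g_inj g_lt.
have u_orth (s s' : 'I_r) : \sum_(y < 2 ^ L) u_amp R N a r s y * (u_amp R N a r s' y)^*%C =
    (s == s')%:R * 1 by rewrite mulr1 u_amp_orthonormal.
under eq_bigr do rewrite normrM exprMn sqr_normc_real exprVn sqr_sqrtr ?ler0n //.
by rewrite -mulr_sumr (sum_sqr_normc_orthogonal _ u_orth) mulr1.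
Qed.

Lemma prob_Ak_factor L k N a r p m : (0 < k)%N ->
  injective (fun q : 'I_r => a ^ q %% N)%N -> (forall q : 'I_r, a ^ q %% N < 2 ^ L)%N ->
  (prob_Ak R L k N a r p m)%:C = ((r%:R : R)^-1)%:C * \sum_(s < r) \prod_(j < k)
    \sum_(v | allowed_outcomes L k p m j v)
      `|psi_amp R (t_ L k p j.+1) (omega R L k r j.+1 s) v| ^+ 2.
Proof.
move=> k_gt0 g_inj g_lt; rewrite /prob_Ak rmorph_sum.
under eq_bigr => x _.
  rewrite rmorph_sum (eq_bigr _ (fun y _ => add_Re2_Im2 _)) sum_sqr_norm_phi_amp //.
  over.
rewrite -mulr_sumr exchange_big; congr (_ * _); apply: eq_bigr => s _.
rewrite bigA_distr_big_dep; apply: eq_big => [x|x _]; first exact: valid_outcome_family.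
by rewrite normr_prod -prodrXl.
Qed.

Lemma prod_allowed_psi_eq1 L k r p m s K :
  (0 < L)%N -> (0 < k)%N -> (k %| L)%N -> (m < 2 ^ t_ L k p k)%N ->
  omega R L k r k s = K%:R + m%:R / 2 ^+ t_ L k p k ->
  \prod_(j < k) \sum_(v | allowed_outcomes L k p m j v)
    `|psi_amp R (t_ L k p j.+1) (omega R L k r j.+1 s) v| ^+ 2 = 1.
Proof.
move=> L_gt0 k_gt0 k_dvd_L m_lt omega_eq; apply: big1 => j _.
have t_le_Bnd := exp_t_le_Bnd L_gt0 k_gt0 k_dvd_L p j.
case: (eqVneq j.+1 k) => [j_last | j_not_last].
  rewrite j_last in t_le_Bnd *.
  have m_lt_Bnd := leq_trans m_lt t_le_Bnd.
  rewrite (big_pred1 (Ordinal m_lt_Bnd)) => [|v]; last first.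
    rewrite /allowed_outcomes /= j_last eqxx /= -val_eqE /=.
    by case: (eqVneq (val v) m) => [->|]; rewrite ?m_lt ?andbF.
  by rewrite (psi_amp_peak omega_eq) normr1 expr1n.
rewrite (eq_bigl (fun v : 'I_(Bnd L p) => (v < 2 ^ t_ L k p j.+1)%N)) => [|v]; last first.
  by rewrite /allowed_outcomes /= (negbTE j_not_last) andbT.
rewrite -(big_ord_widen _
  (fun v => `|psi_amp R (t_ L k p j.+1) (omega R L k r j.+1 s) v| ^+ 2) t_le_Bnd).
exact: sum_sqr_norm_psi_amp.
Qed.

End Amplitudes.

Unset Implicit Arguments.

Theorem lemma2 (R : realType) (L k N a r : nat) (eps : R) (s0 : nat) :
  (1 <= L)%N -> (1 <= k)%N -> (k %| L)%N -> Lbit L N ->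
  (0 < a < N)%N -> coprime a N -> is_order N a r -> 0 < eps ->
  (s0 < r)%N -> (r %| s0 * 2 ^ (l_ L k k + 1))%N ->
  let p := p_of R k eps in
  let lk := l_ L k k in
  let tk := t_ L k p k in
  let c := bit_c r s0 (lk + 1) in
  let m := (c lk * 2 ^ (tk - 1) + c (lk + 1) * 2 ^ (tk - 2))%N in
  (r%:R : R)^-1 <= prob_Ak R L k N a r p m.
Proof.
move=> L_gt0 k_gt0 k_dvd_L /andP[_ N_lt] /andP[a_gt0 a_lt_N] a_coprime r_order _ s0_lt_r r_dvd.
cbv zeta; set p := p_of R k eps; set lk := l_ L k k; set tk := t_ L k p k.
set m := (_ + _)%N.
have r_gt0 : (0 < r)%N := r_order.1.
have g_inj := order_expn_mod_inj a_gt0 a_coprime r_order.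
have g_lt (q : 'I_r) : (a ^ q %% N < 2 ^ L)%N.
  by rewrite (ltn_trans (ltn_pmod _ _) N_lt) // (leq_trans _ a_lt_N).
have /andP[lk_gt0 _] := l_last_bounds L_gt0 k_gt0 k_dvd_L.
have tk_ge2 : (2 <= tk)%N := t_last_ge2 L_gt0 k_gt0 k_dvd_L p.
have m_lt : (m < 2 ^ tk)%N := two_bits_lt tk_ge2 (bit_c_lt2 _ _ _ _) (bit_c_lt2 _ _ _ _).
have s0_term := prod_allowed_psi_eq1 (s := Ordinal s0_lt_r) L_gt0 k_gt0 k_dvd_L m_lt
  (phase_binary_expansion R lk_gt0 tk_ge2 r_gt0 r_dvd).
rewrite -lecR (prob_Ak_factor _ _ _ k_gt0 g_inj g_lt).
rewrite -[X in X <= _]mulr1 ler_wpM2l ?ler0c ?invr_ge0 ?ler0n //.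
rewrite (bigD1 (Ordinal s0_lt_r)) //= s0_term lerDl.
by apply: sumr_ge0 => s _; apply: prodr_ge0 => j _; apply: sumr_ge0 => v _; exact: exprn_ge0.
Qed.
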